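(* Let $\mathcal{P}$ be a convex polytope in $\mathbb{R}^n$ symmetric about the origin with nonempty interior, and let $G_{\mathcal{P}}$ be an induced subgraph of $G(\mathbb{R}^n,\Vert\cdot\Vert_{\mathcal{P}})$ with vertex set $V$. Assume there is a graph $\tilde G$ with vertex set $V$ such that for all $x,y\in V$, $\tilde d(x,y)=2$ implies $\Vert x-y\Vert_{\mathcal{P}}=1$. Let $A\subset V$ avoid polytope distance $1$ (i.e. $\Vert x-y\Vert_{\mathcal{P}}\neq1$ for all $x,y\in A$). Then $A$ can be written as a union $A=\bigcup_{C\in\mathcal{C}}C$ of cliques of $\tilde G$ such that $N[C]\cap N[C']=\emptyset$ for all distinct $C,C'\in\mathcal{C}$.
   Context: $\Vert x\Vert_{\mathcal{P}}=\inf\{\lambda\geq0:x\in\lambda\mathcal{P}\}$. $G(\mathbb{R}^n,\Vert\cdot\Vert)$ is the graph on $\mathbb{R}^n$ with $x,y$ adjacent iff $\Vert x-y\Vert=1$. $\tilde d$ denotes graph distance in $\tilde G$. A clique of $\tilde G$ is a set $C\subset V$ any two distinct elements of which are adjacent in $\tilde G$. For $C\subset V$, its closed neighborhood is $N[C]=\{v\in V:\tilde d(v,C)\leq1\}$. *)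

From mathcomp Require Import all_boot all_order all_algebra.
From mathcomp Require Import classical_sets reals.
Set Implicit Arguments. Unset Strict Implicit. Unset Printing Implicit Defensive.
Import Order.TTheory GRing.Theory Num.Theory.
Local Open Scope ring_scope.
Local Open Scope classical_set_scope.

Section Defs.
Variables (R : realType) (n : nat).
Notation pt := 'rV[R]_n.

Definition conv_hull (m : nat) (v : 'I_m -> pt) : set pt :=
  [set x | exists w : 'I_m -> R, (forall i, 0 <= w i) /\
     \sum_(i < m) w i = 1 /\ x = \sum_(i < m) w i *: v i].

Definition convex_polytope (P : set pt) : Prop :=
  exists m (v : 'I_m -> pt), P = conv_hull v.

Definition origin_symmetric (P : set pt) : Prop :=
  forall x, P x -> P (- x).

(* nonempty interior (w.r.t. the standard topology, via sup-norm boxes) *)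
Definition nonempty_interior (P : set pt) : Prop :=
  exists c : pt, exists eps : R, 0 < eps /\
    forall y : pt, (forall i, `|y 0 i - c 0 i| < eps) -> P y.

Definition polytope_norm (P : set pt) (x : pt) : R :=
  inf [set l : R | 0 <= l /\ exists p, P p /\ x = l *: p].

Inductive walk (V : set pt) (adj : pt -> pt -> Prop) : nat -> pt -> pt -> Prop :=
  | walk0 x : V x -> walk V adj 0 x x
  | walkS k x y z : V x -> adj x y -> walk V adj k y z -> walk V adj k.+1 x z.

Definition gdist_eq (V : set pt) (adj : pt -> pt -> Prop) (k : nat) (x y : pt) : Prop :=
  walk V adj k x y /\ forall j, (j < k)%N -> ~ walk V adj j x y.

Definition is_clique (V : set pt) (adj : pt -> pt -> Prop) (C : set pt) : Prop :=
  C `<=` V /\ forall x y, C x -> C y -> x <> y -> adj x y.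

Definition closed_nbhd (V : set pt) (adj : pt -> pt -> Prop) (C : set pt) : set pt :=
  [set v | V v /\ exists c, C c /\ exists k, (k <= 1)%N /\ walk V adj k v c].

End Defs.

From mathcomp Require Import all_boot all_order all_algebra.
From mathcomp Require Import boolp classical_sets reals.
Set Implicit Arguments.
Unset Strict Implicit.
Unset Printing Implicit Defensive.

Import Order.TTheory GRing.Theory Num.Theory.
Local Open Scope ring_scope.
Local Open Scope classical_set_scope.

(* Only the combinatorial hypothesis matters: points of A are never at graph
   distance 2.  Then two points of A with a common closed neighbour are equal
   or adjacent, so "equal or adjacent" is an equivalence relation on A whose
   classes are cliques, and a vertex in the closed neighbourhoods of two
   classes would make them coincide. *)

Section CliqueCover.
Variables (R : realType) (n : nat).
Variables (V : set 'rV[R]_n) (adj : 'rV[R]_n -> 'rV[R]_n -> Prop).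
Hypothesis adjV : forall x y, adj x y -> V x /\ V y.
Hypothesis adj_sym : forall x y, adj x y -> adj y x.

Definition radj (x y : 'rV[R]_n) : Prop := x = y \/ adj x y.

Lemma radj_sym x y : radj x y -> radj y x.
Proof. by case=> [->|/adj_sym]; [left|right]. Qed.

Lemma walk0_eq x y : walk V adj 0 x y -> x = y.
Proof. by move=> w; inversion w. Qed.

Lemma walk1_adj x y : walk V adj 1 x y -> adj x y.
Proof.
by move=> w; inversion w as [|k x' y' z Vx xy' yy']; rewrite -(walk0_eq yy').
Qed.

Lemma walk_le1_radj k x y : (k <= 1)%N -> walk V adj k x y -> radj x y.
Proof.
by case: k => [_ /walk0_eq|[_ /walk1_adj|//]]; [left|right].
Qed.

Lemma gdist2_common_radj x y z : V x -> V y ->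
  radj z x -> radj z y -> ~ radj x y -> gdist_eq V adj 2 x y.
Proof.
move=> Vx Vy [<-|zx] [ezy|zy] nxy.
- by case: nxy; left.
- by case: nxy; right.
- by case: nxy; right; rewrite -ezy; apply: adj_sym.
split=> [|j j2 w]; last exact: nxy (walk_le1_radj j2 w).
apply: walkS Vx (adj_sym zx) _.
apply: walkS (proj1 (adjV zy)) zy _.
exact: walk0.
Qed.

Variable A : set 'rV[R]_n.
Hypothesis AV : A `<=` V.
Hypothesis A_gdist2_free : forall x y, A x -> A y -> ~ gdist_eq V adj 2 x y.

Lemma radj_common_radj x y z : A x -> A y -> radj z x -> radj z y -> radj x y.
Proof.
move=> Ax Ay zx zy; apply: contra_notP (A_gdist2_free Ax Ay).
exact: gdist2_common_radj (AV Ax) (AV Ay) zx zy.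
Qed.

Lemma radj_trans x y z : A x -> A z -> radj x y -> radj y z -> radj x z.
Proof. by move=> Ax Az xy; apply: radj_common_radj Ax Az (radj_sym xy). Qed.

Definition cluster (a : 'rV[R]_n) : set 'rV[R]_n := [set b | A b /\ radj a b].

Lemma cluster_clique a : is_clique V adj (cluster a).
Proof.
split=> [b [Ab _]|x y [Ax ax] [Ay ay] nxy]; first exact: AV.
by case: (radj_common_radj Ax Ay ax ay).
Qed.

Lemma cluster_radj_eq a b : A a -> A b -> radj a b -> cluster a = cluster b.
Proof.
move=> Aa Ab ab; rewrite eqEsubset; split=> c [Ac ac]; split=> //.
- exact: radj_trans Ab Ac (radj_sym ab) ac.
- exact: radj_trans Aa Ac ab ac.
Qed.

Lemma closed_nbhd_cluster_meet a a' v : A a -> A a' ->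
  closed_nbhd V adj (cluster a) v -> closed_nbhd V adj (cluster a') v ->
  cluster a = cluster a'.
Proof.
move=> Aa Aa' [_ [c [[Ac ac] [k [k1 vc]]]]] [_ [c' [[Ac' ac'] [k' [k1' vc']]]]].
have cc' := radj_common_radj Ac Ac' (walk_le1_radj k1 vc) (walk_le1_radj k1' vc').
apply: (cluster_radj_eq Aa Aa').
exact: radj_trans Aa Aa' (radj_trans Aa Ac' ac cc') (radj_sym ac').
Qed.

Theorem gdist2_free_clique_cover : exists CC : set (set 'rV[R]_n),
  (forall C, CC C -> is_clique V adj C) /\
  A = \bigcup_(C in CC) C /\
  (forall C C', CC C -> CC C' -> C <> C' ->
     closed_nbhd V adj C `&` closed_nbhd V adj C' = set0).
Proof.
exists (cluster @` A); split; [|split].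
- by move=> _ [a _ <-]; apply: cluster_clique.
- rewrite eqEsubset; split=> [a Aa|b [_ [a _ <-] [Ab _]] //].
  by exists (cluster a); [exists a|split=> //; left].
- move=> _ _ [a Aa <-] [a' Aa' <-] neq; rewrite -subset0 => v [va va'].
  exact: neq (closed_nbhd_cluster_meet Aa Aa' va va').
Qed.

End CliqueCover.

Theorem lemma4 (R : realType) (n : nat) (P : set 'rV[R]_n)
  (V : set 'rV[R]_n) (adj : 'rV[R]_n -> 'rV[R]_n -> Prop) (A : set 'rV[R]_n) :
  convex_polytope P -> origin_symmetric P -> nonempty_interior P ->
  (forall x y, adj x y -> V x /\ V y) ->
  (forall x y, adj x y -> adj y x) ->
  (forall x, ~ adj x x) ->
  (forall x y, V x -> V y -> gdist_eq V adj 2 x y -> polytope_norm P (x - y) = 1) ->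
  A `<=` V ->
  (forall x y, A x -> A y -> polytope_norm P (x - y) <> 1) ->
  exists CC : set (set 'rV[R]_n),
    (forall C, CC C -> is_clique V adj C) /\
    A = \bigcup_(C in CC) C /\
    (forall C C', CC C -> CC C' -> C <> C' ->
       closed_nbhd V adj C `&` closed_nbhd V adj C' = set0).
Proof.
move=> _ _ _ adjV adj_sym _ gdist2_unit AV A_avoids_unit.
apply: (gdist2_free_clique_cover adjV adj_sym AV) => x y Ax Ay xy.
exact: A_avoids_unit x y Ax Ay (gdist2_unit x y (AV _ Ax) (AV _ Ay) xy).
Qed.
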